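(* Suppose each interface function $g_k$ belongs to $C^2[0,L_x]$ and $\varepsilon$ is piecewise constant (constant on each $\Omega_k$). Then there is a constant $C_9>0$ independent of $h$ such that $$\sum_{j=1}^{S}\operatorname{meas}\big(\operatorname{supp}_{S_j}|\varepsilon-\varepsilon_h|\big)\le C_9 h.$$
   Context: $H,L_x>0$, $\Omega=(0,L_x)\times(-H,H)$. There are $I\ge1$ interfaces given by $g_k:[0,L_x]\to\mathbb R$ ($k=1,\dots,I$) whose graphs are separated from each other and from $x_2=\pm H$ by some $\delta>0$; $\Omega_k$ ($k=1,\dots,I+1$) is the region of $\Omega$ between the graphs of $g_{k-1}$ and $g_k$ ($g_0\equiv -H$, $g_{I+1}\equiv H$). $\varepsilon:\Omega\to\mathbb C$ is the relative permittivity. Slices: $-H=h_0<h_1<\dots<h_S=H$, $S_j=\{(x_1,x_2)\in\Omega:h_{j-1}\le x_2<h_j\}$, $\Delta h_j=h_j-h_{j-1}$, $h=\max_j\Delta h_j$, with $h/\min_j\Delta h_j\le C_\Delta$ for a fixed constant $C_\Delta>0$, and every point where $g_k'=0$ lies on an inter-slice line $x_2=h_j$. The stairstep approximation is $\varepsilon_h(x_1,x_2)=\varepsilon(x_1,h_{j-1/2})$ on $S_j$, $h_{j-1/2}=(h_{j-1}+h_j)/2$. $\operatorname{supp}_{S_j}|\varepsilon-\varepsilon_h|$ is the set of points of $S_j$ where $\varepsilon\ne\varepsilon_h$, and meas is Lebesgue measure. *)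

From HB Require Import structures.
From mathcomp Require Import all_boot all_order all_algebra.
From mathcomp Require Import all_classical all_reals all_analysis.
From mathcomp Require Import complex.
Set Implicit Arguments. Unset Strict Implicit. Unset Printing Implicit Defensive.
Import Order.TTheory GRing.Theory Num.Theory.
Import numFieldNormedType.Exports.
Local Open Scope classical_set_scope.
Local Open Scope ring_scope.

Section Defs.
Variable R : realType.

Definition deriv_within_at (a b : R) (f : R -> R) (x l : R) : Prop :=
  (fun t : R => t^-1 * (f (x + t) - f x)) @
     (within [set t : R | a <= x + t <= b] (0:R)^') --> l.

Definition C2_on (a b : R) (f : R -> R) : Prop :=
  exists f1 f2 : R -> R,
    (forall x, a <= x <= b -> deriv_within_at a b f x (f1 x)) /\
    (forall x, a <= x <= b -> deriv_within_at a b f1 x (f2 x)) /\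
    {within [set x | a <= x <= b], continuous f2}.

Definition gext (H : R) (I : nat) (g : nat -> R -> R) (k : nat) (x : R) : R :=
  if k == 0%N then - H else if k == I.+1 then H else g k x.

Definition Omega (H Lx : R) : set (R * R) :=
  [set p | 0 < p.1 < Lx /\ - H < p.2 < H].

Definition Omega_k (H Lx : R) (I : nat) (g : nat -> R -> R) (k : nat)
  : set (R * R) :=
  [set p | Omega H Lx p /\
     gext H I g k.-1 p.1 < p.2 < gext H I g k p.1].

Definition slice (H Lx : R) (hs : nat -> R) (j : nat) : set (R * R) :=
  [set p | Omega H Lx p /\ hs j.-1 <= p.2 < hs j].

Definition hmid (hs : nat -> R) (j : nat) : R := (hs j.-1 + hs j) / 2.

(* stairstep approximation: eps_h (x1,x2) = eps (x1, h_{j-1/2}) on S_j *)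
Definition supp_diff (H Lx : R) (eps : R * R -> R[i]) (hs : nat -> R) (j : nat)
  : set (R * R) :=
  [set p | slice H Lx hs j p /\ eps p != eps (p.1, hmid hs j)].

Definition hmax (S : nat) (hs : nat -> R) : R :=
  \big[Num.max/0]_(1 <= j < S.+1) (hs j - hs j.-1).

Definition meas2 : set (R * R) -> \bar R :=
  (@lebesgue_measure R \x @lebesgue_measure R)%E.

End Defs.

From HB Require Import structures.
From mathcomp Require Import all_boot all_order all_algebra.
From mathcomp Require Import all_classical all_reals all_analysis.
From mathcomp Require Import complex.
From mathcomp Require Import lra zify measurable_realfun.
Set Implicit Arguments. Unset Strict Implicit. Unset Printing Implicit Defensive.
Import Order.TTheory GRing.Theory Num.Theory.
Import numFieldNormedType.Exports.
Local Open Scope classical_set_scope.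
Local Open Scope ring_scope.

(* If the vertical segment {x} * [h_(j-1), h_j) meets supp_(S_j) |eps - eps_h|
   at height y, then eps(x, y) <> eps(x, h_(j-1/2)); since eps is constant
   between consecutive interfaces, some g_k(x) lies between y and h_(j-1/2),
   hence in [h_(j-1), h_j). So the x-section of supp_(S_j) has length at most
   Delta h_j <= h, and it is empty unless some interface passes through S_j
   above x. For fixed x and k this happens for at most one j, so integrating
   in x gives sum_j meas(supp_(S_j)) <= I * L_x * h. *)

Lemma deriv_within_derivable (R : realType) (a b : R) (f : R -> R) x l :
  a < x < b -> deriv_within_at a b f x l -> derivable f x 1.
Proof.
move=> /andP[ax xb] fl.
have near_ab : \forall t \near (0:R)^', a <= x + t <= b.
  apply: cvg_within; apply/nbhs_ballP; exists (Num.min (x - a) (b - x)).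
    by rewrite /= lt_min !subr_gt0 ax xb.
  move=> t; rewrite /ball /= sub0r normrN lt_min => /andP[].
  have := ler_norm t; have := ler_norm (- t); rewrite normrN /=; lra.
apply/cvg_ex; exists l.
have -> : (fun h : R => h^-1 *: (f (h *: 1 + x) - f x)) =
          (fun t : R => t^-1 * (f (x + t) - f x)).
  by apply/funext => t /=; rewrite -[t%:A]/(t * 1) mulr1 (addrC t x).
by move=> P /fl; rewrite /within; apply: filterS2 near_ab => t + Pt; apply: Pt.
Qed.

Lemma C2_on_measurable (R : realType) (a b : R) (f : R -> R) :
  C2_on a b f -> measurable_fun `]a, b[ f.
Proof.
move=> [f1 [_ [f_f1 _]]]; apply: subspace_continuous_measurable_fun => //.
apply: derivable_within_continuous => x; rewrite in_itv /= => xab.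
apply: (deriv_within_derivable xab (f_f1 x _)).
by case/andP: xab => ax xb; rewrite !ltW.
Qed.

(* No measurability is needed: a nonnegative integral is a supremum over
   simple minorants. *)
Lemma ge0_le_integral_nonmeas d (T : measurableType d) (R : realType)
    (mu : {measure set T -> \bar R}) (f g : T -> \bar R) :
  (forall x, 0 <= f x)%E -> (forall x, f x <= g x)%E ->
  (\int[mu]_x f x <= \int[mu]_x g x)%E.
Proof.
move=> f0 fg; have g0 x : (0 <= g x)%E by apply: le_trans (f0 x) (fg x).
rewrite !ge0_integralE// !patch_setT.
by apply: ereal_sup_le => _ [h hf <-]; exists h => //= x; apply: le_trans (fg x).
Qed.

Lemma le_lebesgue_measure (R : realType) :
  {homo @lebesgue_measure R : A B / A `<=` B >-> (A <= B)%E}.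
Proof.
move=> A B AB; rewrite /lebesgue_measure /lebesgue_stieltjes_measure.
by rewrite /measure_extension; apply: le_outer_measure.
Qed.

Lemma measurable_sum_in d (T : measurableType d) (R : realType) (D : set T)
    (I : eqType) (s : seq I) (h : I -> T -> R) :
  (forall i, i \in s -> measurable_fun D (h i)) ->
  measurable_fun D (fun x => \sum_(i <- s) h i x).
Proof.
elim: s => [_|i s IH mh].
  by under eq_fun do rewrite big_nil; exact: measurable_cst.
under eq_fun do rewrite big_cons.
apply: measurable_funD; first by apply: mh; rewrite mem_head.
by apply: IH => j js; apply: mh; rewrite inE js orbT.
Qed.

Lemma sumr_le1_single_support (R : numDomainType) (I : eqType) (s : seq I)
    (F : I -> R) :
  uniq s -> (forall i, 0 <= F i <= 1) ->
  {in s &, forall i j, F i != 0 -> F j != 0 -> i = j} ->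
  \sum_(i <- s) F i <= 1.
Proof.
move=> s_uniq F01 F_single.
have [[i0 i0s Fi0]|none] := pselect (exists2 i, i \in s & F i != 0).
  rewrite (bigD1_seq i0) //= big1_seq ?addr0; first by case/andP: (F01 i0).
  move=> i /andP[ii0 i_s]; apply/eqP; apply: contraNT ii0 => Fi.
  by apply/eqP; apply: F_single.
rewrite big1_seq // => i i_s; apply/eqP; apply: contraT => Fi.
by case: none; exists i.
Qed.

Section monotone_seq.
Variables (R : realDomainType) (u : nat -> R) (n : nat).
Hypothesis u_le : forall k, (k < n)%N -> u k <= u k.+1.

Lemma le_seq_upto i j : (i <= j <= n)%N -> u i <= u j.
Proof.
case/andP=> ij jn.
apply: (homo_leq_in (D := [pred k | k <= n]%N) (r := fun a b => a <= b)) => //.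
- exact: le_trans.
- by move=> a b _ /[!inE] bn c /andP[_ cb]; rewrite inE (leq_trans (ltnW cb)).
- by move=> k _ /[!inE]; apply: u_le.
- by rewrite inE (leq_trans ij).
Qed.

Lemma exists_gap z : u 0 < z < u n -> (forall k, (0 < k < n)%N -> u k != z) ->
  exists2 a, (0 < a <= n)%N & u a.-1 < z < u a.
Proof.
move=> /andP[u0z zun] unz.
have n0 : (0 < n)%N.
  by rewrite lt0n; apply: contraTneq zun => n0; rewrite n0 -leNgt ltW.
have ex_above : exists a, (0 < a)%N && (z < u a) by exists n; rewrite n0 zun.
have [a /andP[a0 zua] a_min] := ex_minnP ex_above.
have an : (a <= n)%N by apply: a_min; rewrite n0 zun.
exists a; first by rewrite a0 an.
rewrite zua andbT; have [->//|a1] := posnP a.-1.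
have a1n : (0 < a.-1 < n)%N by lia.
rewrite lt_neqAle unz //= leNgt.
by apply/negP => zua1; have := a_min a.-1; rewrite a1 zua1 => /(_ isT); lia.
Qed.

Lemma gap_unique y z a b :
  (forall k, (0 < k < n)%N -> ~ (Num.min y z <= u k <= Num.max y z)) ->
  (0 < a <= n)%N -> (0 < b <= n)%N ->
  u a.-1 < y < u a -> u b.-1 < z < u b -> a = b.
Proof.
wlog ab : y z a b / (a < b)%N.
  move=> hwlog no_node an bn ya zb; case: (ltngtP a b) => // ab.
    exact: (hwlog y z a b ab no_node an bn ya zb).
  by apply/esym/(hwlog z y) => // k kn; rewrite minC maxC; apply: no_node.
move=> no_node /andP[a0 _] /andP[_ bn] /andP[_ yua] /andP[uzb _]; exfalso.
apply: (no_node a); first by rewrite a0 (leq_trans ab bn).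
have uab : u a <= u b.-1 by apply: le_seq_upto; lia.
by rewrite ge_min le_max (ltW yua) (le_trans uab (ltW uzb)) orbT.
Qed.

End monotone_seq.

Section interfaces.
Variables (R : realType) (H Lx delta : R) (I : nat).
Variables (g : nat -> R -> R) (eps : R * R -> R[i]).
Hypothesis delta_gt0 : 0 < delta.
Hypothesis g_sep : forall k x, (k <= I)%N -> 0 <= x <= Lx ->
  gext H I g k x + delta <= gext H I g k.+1 x.
Hypothesis eps_piecewise_const : forall k, (1 <= k <= I.+1)%N ->
  exists c : R[i], forall p, Omega_k H Lx I g k p -> eps p = c.

Lemma gext_interface k x : (0 < k < I.+1)%N -> gext H I g k x = g k x.
Proof. by case/andP=> k0 kI; rewrite /gext gtn_eqF // ltn_eqF. Qed.

Lemma eps_eq_of_no_interface_between x y z :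
  0 < x < Lx -> - H < y < H -> - H < z < H ->
  (forall k, (1 <= k <= I)%N -> ~ (Num.min y z <= g k x <= Num.max y z)) ->
  eps (x, y) = eps (x, z).
Proof.
move=> x_in y_in z_in no_node.
pose G k := gext H I g k x.
have G0 : G 0%N = - H by [].
have GI : G I.+1 = H by rewrite /G /gext eqxx.
have G_le k : (k < I.+1)%N -> G k <= G k.+1.
  move=> kI; have x01 : 0 <= x <= Lx by case/andP: x_in => x0 xL; rewrite !ltW.
  by apply: le_trans (g_sep kI x01); rewrite lerDl ltW.
have G_no_node k : (0 < k < I.+1)%N -> ~ (Num.min y z <= G k <= Num.max y z).
  by move=> kI; rewrite /G gext_interface //; apply: no_node.
have G_ne w : Num.min y z <= w <= Num.max y z ->
    forall k, (0 < k < I.+1)%N -> G k != w.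
  by move=> w_in k kI; apply/eqP => Gkw; apply: (G_no_node k kI); rewrite Gkw.
have [a a_in ya] : exists2 a, (0 < a <= I.+1)%N & G a.-1 < y < G a.
  by apply: exists_gap; [rewrite G0 GI | apply: G_ne; rewrite ge_min le_max lexx].
have [b b_in zb] : exists2 b, (0 < b <= I.+1)%N & G b.-1 < z < G b.
  by apply: exists_gap; [rewrite G0 GI | apply: G_ne; rewrite ge_min le_max lexx ?orbT].
have ab := gap_unique G_le G_no_node a_in b_in ya zb; subst b.
have [c eps_c] := eps_piecewise_const a_in.
by rewrite !eps_c.
Qed.

End interfaces.

Section slices.
Variables (R : realType) (S : nat) (hs : nat -> R).
Hypothesis hs_incr : forall j, (j < S)%N -> hs j < hs j.+1.

Lemma hs_le i j : (i <= j <= S)%N -> hs i <= hs j.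
Proof. by apply: le_seq_upto => k kS; apply/ltW/hs_incr. Qed.

Lemma hs_pred_lt j : (0 < j <= S)%N -> hs j.-1 < hs j.
Proof. by move=> jS; rewrite -{2}(prednK (n := j)) ?hs_incr //; lia. Qed.

Lemma slice_index_unique v i j : (0 < i <= S)%N -> (0 < j <= S)%N ->
  hs i.-1 <= v < hs i -> hs j.-1 <= v < hs j -> i = j.
Proof.
move=> iS jS /andP[vi1 vi] /andP[vj1 vj]; case: (ltngtP i j) => // ij; exfalso.
- have : hs i <= hs j.-1 by apply: hs_le; lia.
  lra.
- have : hs j <= hs i.-1 by apply: hs_le; lia.
  lra.
Qed.

Lemma le_hmax j : (0 < j <= S)%N -> hs j - hs j.-1 <= hmax S hs.
Proof.
move=> jS; apply: (le_bigmax_seq _ j xpredT (fun j => hs j - hs j.-1)) => //.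
by rewrite mem_index_iota.
Qed.

Lemma hmax_ge0 : 0 <= hmax S hs.
Proof. exact: (bigmax_ge_id (index_iota 1 S.+1) 0 xpredT). Qed.

End slices.

Section crossings.
Variables (R : realType) (H Lx delta : R) (I S : nat).
Variables (g : nat -> R -> R) (eps : R * R -> R[i]) (hs : nat -> R).
Hypothesis delta_gt0 : 0 < delta.
Hypothesis g_sep : forall k x, (k <= I)%N -> 0 <= x <= Lx ->
  gext H I g k x + delta <= gext H I g k.+1 x.
Hypothesis eps_piecewise_const : forall k, (1 <= k <= I.+1)%N ->
  exists c : R[i], forall p, Omega_k H Lx I g k p -> eps p = c.
Hypothesis g_C2 : forall k, (1 <= k <= I)%N -> C2_on 0 Lx (g k).
Hypotheses (hs0 : hs 0%N = - H) (hsS : hs S = H).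
Hypothesis hs_incr : forall j, (j < S)%N -> hs j < hs j.+1.

Definition crossing k j : set R := `]0, Lx[ `&` g k @^-1` `[hs j.-1, hs j[.

Lemma measurable_crossing k j : (1 <= k <= I)%N -> measurable (crossing k j).
Proof.
by move=> kI; apply: (C2_on_measurable (g_C2 kI)) => //; exact: measurable_itv.
Qed.

Lemma supp_diff_crossing j x y : (0 < j <= S)%N ->
  supp_diff H Lx eps hs j (x, y) -> exists2 k, (1 <= k <= I)%N & crossing k j x.
Proof.
move=> jS [[[/= x_in y_in] /= /andP[y_lo y_hi]] eps_ne].
have [|no_crossing] := pselect (exists2 k, (1 <= k <= I)%N & crossing k j x) => //.
have [hs_lo hs_hi] : - H <= hs j.-1 /\ hs j <= H.
  by split; [rewrite -hs0 | rewrite -hsS]; apply: (hs_le hs_incr); lia.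
have hs_lt := hs_pred_lt hs_incr jS.
have mid_lo : hs j.-1 < hmid hs j by rewrite /hmid; lra.
have mid_hi : hmid hs j < hs j by rewrite /hmid; lra.
case/negP: eps_ne; apply/eqP.
apply: (eps_eq_of_no_interface_between delta_gt0 g_sep eps_piecewise_const) => //.
  by apply/andP; split; lra.
move=> k kI /andP[lo hi]; apply: no_crossing; exists k => //; split => //=.
rewrite in_itv /=; apply/andP; split.
  by apply: le_trans lo; rewrite le_min y_lo ltW.
by apply: le_lt_trans hi _; rewrite gt_max y_hi.
Qed.

Definition crossing_count j x : R := \sum_(1 <= k < I.+1) \1_(crossing k j) x.

Lemma meas2_supp_diff_le j : (0 < j <= S)%N ->
  (meas2 (supp_diff H Lx eps hs j) <=
   \int[lebesgue_measure]_x (hmax S hs * crossing_count j x)%:E)%E.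
Proof.
move=> jS; apply: ge0_le_integral_nonmeas => x; first exact: measure_ge0.
have crossing_count_ge0 : 0 <= crossing_count j x by apply: sumr_ge0 => k _.
have [[y]|no_y] := pselect (exists y, xsection (supp_diff H Lx eps hs j) x y).
  rewrite /xsection /= inE => /(supp_diff_crossing jS)[k kI x_k].
  have sec_sub : xsection (supp_diff H Lx eps hs j) x `<=` `[hs j.-1, hs j[.
    by move=> z; rewrite /xsection /= inE => -[[_ /= z_slice] _]; rewrite in_itv.
  apply: le_trans (le_lebesgue_measure sec_sub) _.
  rewrite lebesgue_measure_itv /= lte_fin (hs_pred_lt hs_incr jS) -EFinD lee_fin.
  apply: le_trans (le_hmax _ jS) (ler_peMr (hmax_ge0 _ _) _).
  rewrite /crossing_count (bigD1_seq k) ?mem_index_iota ?iota_uniq //=.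
  by rewrite indicE mem_set // lerDl sumr_ge0.
rewrite /= (_ : xsection _ x = set0) ?measure0 ?lee_fin ?mulr_ge0 ?hmax_ge0 //.
by apply/seteqP; split => // y y_in; apply: no_y; exists y.
Qed.

Lemma sum_crossing_le1 k x :
  \sum_(1 <= j < S.+1) \1_(crossing k j) x <= \1_`]0, Lx[%classic x :> R.
Proof.
have [x_in|x_out] := boolP (x \in `]0, Lx[%classic); last first.
  rewrite indicE (negbTE x_out) big1 // => j _; rewrite indicE memNset //.
  by move=> [x_in _]; move: x_out; rewrite mem_set.
rewrite indicE x_in; apply: sumr_le1_single_support; first exact: iota_uniq.
  by move=> j; rewrite indicE; case: (_ \in _); rewrite ?lexx ?ler01.
move=> i j; rewrite !mem_index_iota !indicE => iS jS.
case: (boolP (x \in crossing k i)) => [/set_mem[_ /= xi]|]; last by rewrite eqxx.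
case: (boolP (x \in crossing k j)) => [/set_mem[_ /= xj]|]; last by rewrite eqxx.
rewrite !in_itv /= in xi xj => _ _.
by apply: (slice_index_unique hs_incr (v := g k x)) => //; rewrite -ltnS.
Qed.

Lemma sum_integral_crossing_count_le : 0 < Lx ->
  (\sum_(1 <= j < S.+1) \int[lebesgue_measure]_x (hmax S hs * crossing_count j x)%:E
    <= (I%:R * Lx * hmax S hs)%:E)%E.
Proof.
move=> Lx_gt0.
have crossing_count_ge0 j x : 0 <= crossing_count j x by apply: sumr_ge0 => k _.
rewrite -ge0_integral_sum //; first last.
- by move=> j x _; rewrite lee_fin mulr_ge0 ?hmax_ge0.
- move=> j; apply/measurable_EFinP/measurable_funM; first exact: measurable_cst.
  apply: measurable_sum_in => k; rewrite mem_index_iota ltnS => kI.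
  by apply: measurable_indic; apply: measurable_crossing.
pose bound x := (hmax S hs * I%:R * \1_`]0, Lx[%classic x)%:E.
have crossing_count_le x :
    ((\sum_(1 <= j < S.+1) (hmax S hs * crossing_count j x)%:E)%R <= bound x)%E.
  rewrite sumEFin lee_fin -mulr_sumr -mulrA ler_wpM2l ?hmax_ge0 // /crossing_count.
  rewrite exchange_big /=.
  apply: le_trans (ler_sum _ (fun k _ => sum_crossing_le1 k x)) _.
  by rewrite sumr_const_nat subn1 mulr_natl.
apply: le_trans (ge0_le_integral_nonmeas lebesgue_measure _ crossing_count_le) _.
  by move=> x; apply: sume_ge0 => j _; rewrite lee_fin mulr_ge0 ?hmax_ge0.
have hmI_ge0 : 0 <= hmax S hs * I%:R by rewrite mulr_ge0 ?hmax_ge0.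
rewrite /bound; under eq_integral do rewrite EFinM.
rewrite ge0_integralZl_EFin //; last exact/measurable_EFinP/measurable_indic.
(* unfold the packed measure so that lebesgue_measure_itv applies *)
rewrite integral_indic // setIT -[X in (_ * X)%E]/(lebesgue_measure `]0, Lx[%classic).
rewrite lebesgue_measure_itv /= lte_fin Lx_gt0 sube0.
by rewrite -EFinM lee_fin [hmax S hs * _]mulrC mulrAC.
Qed.

End crossings.

Theorem lemma5 (R : realType) (H Lx : R) (I : nat) (g : nat -> R -> R)
  (delta : R) (eps : R * R -> R[i]) (C_Delta : R) :
  0 < H -> 0 < Lx -> (1 <= I)%N ->
  0 < delta ->
  (* graphs separated from each other and from x2 = -H, x2 = H by delta *)
  (forall k x, (k <= I)%N -> 0 <= x <= Lx ->
     gext H I g k x + delta <= gext H I g k.+1 x) ->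
  (* each interface is C^2 on [0, Lx] *)
  (forall k, (1 <= k <= I)%N -> C2_on 0 Lx (g k)) ->
  (* eps is constant on each Omega_k *)
  (forall k, (1 <= k <= I.+1)%N -> exists c : R[i],
     forall p, Omega_k H Lx I g k p -> eps p = c) ->
  0 < C_Delta ->
  exists C9 : R, 0 < C9 /\
    forall (S : nat) (hs : nat -> R),
      hs 0%N = - H -> hs S = H ->
      (forall j, (j < S)%N -> hs j < hs j.+1) ->
      (* h / min_j Delta h_j <= C_Delta *)
      (forall j, (1 <= j <= S)%N -> hmax S hs <= C_Delta * (hs j - hs j.-1)) ->
      (* every point where g_k' = 0 lies on an inter-slice line *)
      (forall k x, (1 <= k <= I)%N -> 0 <= x <= Lx ->
         deriv_within_at 0 Lx (g k) x 0 ->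
         exists j, (j <= S)%N /\ g k x = hs j) ->
      (\sum_(1 <= j < S.+1) meas2 (supp_diff H Lx eps hs j)
         <= (C9 * hmax S hs)%:E)%E.
Proof.
move=> _ Lx_gt0 I_gt0 delta_gt0 g_sep g_C2 eps_piecewise_const _.
exists (I%:R * Lx); split; first by rewrite mulr_gt0 ?ltr0n.
move=> S hs hs0 hsS hs_incr _ _.
apply: le_trans _ (sum_integral_crossing_count_le g_C2 hs_incr Lx_gt0).
rewrite big_nat [X in (_ <= X)%E]big_nat; apply: lee_sum => j jS.
exact: (meas2_supp_diff_le delta_gt0 g_sep eps_piecewise_const hs0 hsS hs_incr).
Qed.
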